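(* Let $F$ be a field of characteristic $\neq 2,3$, $C$ a Cayley–Dickson algebra over $F$ and $\gamma_1,\gamma_2,\gamma_3 \in F\setminus\{0\}$. Then the Jordan algebra $H(C_3,*_\gamma)$ has no nonzero derivation $d$ such that every value $d(x)$ is invertible or zero; i.e. $H(C_3,*_\gamma)$ admits no derivation with invertible values.
   Context: $C$ carries its standard involution $c\mapsto \bar c$, with norm $n$ and trace $t$. $C_3$ is the algebra of $3\times3$ matrices over $C$; for $X\in C_3$, $\bar X^T$ denotes the matrix obtained by transposing and applying $\bar{\ }$ to every entry. With $\gamma = \mathrm{diag}(\gamma_1,\gamma_2,\gamma_3)$, the involution $*_\gamma$ is $X^{*_\gamma} = \gamma^{-1}\bar X^T\gamma$, and $H(C_3,*_\gamma)=\{X: X^{*_\gamma}=X\}$ with product $X\circ Y = \tfrac12(XY+YX)$, a simple exceptional Jordan algebra. An element $x$ of a unital Jordan algebra $J$ is invertible if there exists $y\in J$ with $xy=1$, $x^2y=x$. A derivation with invertible values of $J$ is a nonzero derivation $d$ of $J$ such that for every $x \in J$, $d(x)$ is either invertible or equal to $0$. *)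

From HB Require Import structures.
From mathcomp Require Import all_boot all_order all_algebra.
Set Implicit Arguments. Unset Strict Implicit. Unset Printing Implicit Defensive.
Import GRing.Theory.
Local Open Scope ring_scope.

(* An F-vector space with a (not necessarily associative) bilinear product
   and an involution, given by explicit operations. *)
Record cda (F : fieldType) := CDA {
  cT : Type;
  c0 : cT;
  c1 : cT;
  cadd : cT -> cT -> cT;
  copp : cT -> cT;
  cmul : cT -> cT -> cT;
  cconj : cT -> cT;
  cscale : F -> cT -> cT }.

Definition cd_base (F : fieldType) : cda F :=
  @CDA F F 0 1 +%R (fun x => - x) *%R id *%R.

(* Cayley-Dickson doubling with parameter g (Schafer's convention):
   (a,b)(c,d) = (ac + g d^- b, d a + b c^-),   (a,b)^- = (a^-, -b). *)
Definition cd_double (F : fieldType) (A : cda F) (g : F) : cda F :=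
  @CDA F (cT A * cT A)
    (c0 A, c0 A) (c1 A, c0 A)
    (fun x y => (cadd x.1 y.1, cadd x.2 y.2))
    (fun x => (copp x.1, copp x.2))
    (fun x y => (cadd (cmul x.1 y.1) (cscale g (cmul (cconj y.2) x.2)),
                 cadd (cmul y.2 x.1) (cmul x.2 (cconj y.1))))
    (fun x => (cconj x.1, copp x.2))
    (fun a x => (cscale a x.1, cscale a x.2)).

(* The Cayley-Dickson (octonion) algebra C = CD(F; a, b, c), a b c nonzero. *)
Definition cayley_dickson (F : fieldType) (a b c : F) : cda F :=
  cd_double (cd_double (cd_double (cd_base F) a) b) c.

Definition mx3 (F : fieldType) (C : cda F) := 'I_3 -> 'I_3 -> cT C.

Definition o0 : 'I_3 := @Ordinal 3 0 isT.
Definition o1 : 'I_3 := @Ordinal 3 1 isT.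
Definition o2 : 'I_3 := @Ordinal 3 2 isT.

Section Mx.
Variables (F : fieldType) (C : cda F).

Definition mx0 : mx3 C := fun _ _ => c0 C.
Definition mx1 : mx3 C := fun i j => if i == j then c1 C else c0 C.
Definition mxadd (X Y : mx3 C) : mx3 C := fun i j => cadd (X i j) (Y i j).
Definition mxscale (a : F) (X : mx3 C) : mx3 C := fun i j => cscale a (X i j).
Definition mxmul (X Y : mx3 C) : mx3 C := fun i j =>
  cadd (cmul (X i o0) (Y o0 j)) (cadd (cmul (X i o1) (Y o1 j)) (cmul (X i o2) (Y o2 j))).

Definition jmul (X Y : mx3 C) : mx3 C :=
  mxscale (2%:R)^-1 (mxadd (mxmul X Y) (mxmul Y X)).

(* X \in H(C_3, *_gamma):  X = gamma^-1 (conj X)^T gamma, entrywise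
   X i j = gamma_i^-1 gamma_j conj(X j i). *)
Definition herm (gam : 'I_3 -> F) (X : mx3 C) : Prop :=
  forall i j, X i j = cscale (gam i)^-1 (cscale (gam j) (cconj (X j i))).

Definition jinvertible (gam : 'I_3 -> F) (X : mx3 C) : Prop :=
  exists Y, herm gam Y /\ jmul X Y = mx1 /\ jmul (jmul X X) Y = X.

(* d (a function on C_3, only its restriction to J matters) is a derivation of J:
   maps J to J, is F-linear on J, and satisfies the Leibniz rule on J. *)
Definition jderivation (gam : 'I_3 -> F) (d : mx3 C -> mx3 C) : Prop :=
  (forall X, herm gam X -> herm gam (d X)) /\
  (forall X Y, herm gam X -> herm gam Y -> d (mxadd X Y) = mxadd (d X) (d Y)) /\
  (forall a X, herm gam X -> d (mxscale a X) = mxscale a (d X)) /\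
  (forall X Y, herm gam X -> herm gam Y ->
     d (jmul X Y) = mxadd (jmul (d X) Y) (jmul X (d Y))).

Definition inv_valued_derivation (gam : 'I_3 -> F) (d : mx3 C -> mx3 C) : Prop :=
  jderivation gam d /\
  (exists X, herm gam X /\ d X <> mx0) /\
  (forall X, herm gam X -> d X = mx0 \/ jinvertible gam (d X)).

End Mx.

(* Since E_l is idempotent, the Leibniz rule puts d(E_l) in the Peirce 1/2
   space of E_l; once d(E_l) = 0 it also puts d(P) in the Peirce 0 space of E_l
   whenever P has zero row and column l, because then E_l o P = 0.  A trace
   argument shows that neither Peirce space of a diagonal matrix unit contains
   an invertible element, so d vanishes on the E_l and on every such P, and
   every hermitian matrix is a sum of three such P, one for each l. *)

From mathcomp Require Import all_boot all_order all_algebra.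
From mathcomp Require Import ring.
From Stdlib Require Import FunctionalExtensionality.

Set Implicit Arguments. Unset Strict Implicit. Unset Printing Implicit Defensive.
Import GRing.Theory.
Local Open Scope ring_scope.

Lemma ord3P (i : 'I_3) : [\/ i = o0, i = o1 | i = o2].
Proof.
case: i => [[|[|[|n]]] ?] //; [constructor 1 | constructor 2 | constructor 3];
  exact: val_inj.
Qed.

Ltac case_ord3 i := let e := fresh in case: (ord3P i) => e; subst i.

Lemma sum_ord3 (R : nmodType) (f : 'I_3 -> R) :
  \sum_(k < 3) f k = f o0 + f o1 + f o2.
Proof.
rewrite !big_ord_recl big_ord0 addr0 addrA.
by congr (f _ + f _ + f _); exact: val_inj.
Qed.

Lemma sum_cross_pattern (R : nmodType) n (s : 'I_n -> 'I_n -> R) l :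
  (forall i k, (i == l) = (k == l) -> s i k = 0) ->
  \sum_i \sum_k s i k = \sum_k (s l k + s k l).
Proof.
move=> s0; rewrite (bigD1 l) //= big_split /=; congr (_ + _).
rewrite [RHS](bigD1 l) //= s0 // add0r.
apply: eq_bigr => i il; rewrite (bigD1 l) //= big1 ?addr0 // => k kl.
by apply: s0; rewrite (negbTE il) (negbTE kl).
Qed.

Lemma mx_ext (F : fieldType) (C : cda F) (X Y : mx3 C) :
  (forall i j, X i j = Y i j) -> X = Y.
Proof. by move=> XY; do 2!apply: functional_extensionality => ?; exact: XY. Qed.

Section TracedAlgebra.
Variables (F : fieldType) (K : cda F) (tau : cT K -> F).
Local Notation M := (mx3 K).
Local Notation h := ((2%:R : F)^-1).

Hypotheses (tauC : forall x y, tau (cmul x y) = tau (cmul y x))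
  (tauD : forall x y, tau (cadd x y) = tau x + tau y)
  (tauZ : forall r x, tau (cscale r x) = r * tau x)
  (tau0 : tau (c0 K) = 0) (tau1 : tau (c1 K) = 1)
  (add0c : forall x, cadd (c0 K) x = x) (addc0 : forall x, cadd x (c0 K) = x)
  (mul0c : forall x, cmul (c0 K) x = c0 K) (mulc0 : forall x, cmul x (c0 K) = c0 K)
  (mul1c : forall x, cmul (c1 K) x = x) (mulc1 : forall x, cmul x (c1 K) = x)
  (scalec0 : forall r, cscale r (c0 K) = c0 K)
  (scaleK : forall (r : F) (x : cT K), r != 0 -> cscale r^-1 (cscale r x) = x)
  (conj0 : cconj (c0 K) = c0 K) (conj1 : cconj (c1 K) = c1 K)
  (half_double : forall x : cT K, cscale h (cadd x x) = x)
  (double_eq_self : forall x, cadd x x = x -> x = c0 K)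
  (two_neq0 : (2%:R : F) != 0).

Lemma scale_eq0 r x : r != 0 -> cscale r x = c0 K -> x = c0 K.
Proof. by move=> r0 rx0; rewrite -(scaleK x r0) rx0 scalec0. Qed.

Lemma mxadd00 : mxadd (mx0 K) (mx0 K) = mx0 K.
Proof. by apply: mx_ext => i j; rewrite /mxadd add0c. Qed.

Lemma jmul0l (X : M) : jmul (mx0 K) X = mx0 K.
Proof.
apply: mx_ext => i j.
by rewrite /jmul /mxscale /mxadd /mxmul !mul0c !mulc0 !add0c scalec0.
Qed.

Definition tr_term (z Y : M) i k := tau (cmul (z i k) (Y k i)).

Lemma tau_mxmul (X Y : M) i j :
  tau (mxmul X Y i j) = \sum_k tau (cmul (X i k) (Y k j)).
Proof. by rewrite sum_ord3 /mxmul !tauD addrA. Qed.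

Lemma tau_jmul_diag (z Y : M) i :
  tau (jmul z Y i i) = h * \sum_k (tr_term z Y i k + tr_term z Y k i).
Proof.
rewrite /jmul /mxscale /mxadd tauZ tauD !tau_mxmul big_split /=.
by congr (_ * (_ + _)); apply: eq_bigr => k _; rewrite tauC.
Qed.

Lemma sum_tau_jmul_diag (z Y : M) :
  \sum_i tau (jmul z Y i i) = \sum_i \sum_k tr_term z Y i k.
Proof.
under eq_bigr do rewrite tau_jmul_diag.
rewrite -mulr_sumr; under eq_bigr do rewrite big_split.
rewrite big_split /= [X in _ + X]exchange_big /=.
by field.
Qed.

Lemma three_neq_two : (3%:R : F) != 2%:R.
Proof. by rewrite -subr_eq0 -natrB //= oner_eq0. Qed.

Lemma not_jinvertible_peirce0 gam (z : M) l :
  (forall k, z l k = c0 K) -> (forall k, z k l = c0 K) -> ~ jinvertible gam z.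
Proof.
move=> zr zc [Y [_ [zY _]]].
have := tau_jmul_diag z Y l; rewrite zY /mx1 eqxx tau1 big1 ?mulr0 => [|k _].
  by move/eqP; rewrite oner_eq0.
by rewrite /tr_term zr zc !mul0c tau0 addr0.
Qed.

Lemma not_jinvertible_peirce_half gam (z : M) l :
  (forall i j, (i == l) = (j == l) -> z i j = c0 K) -> ~ jinvertible gam z.
Proof.
move=> z0 [Y [_ [zY _]]].
(* The diagonal traces of z o Y = 1 add up to 3, but by the Peirce pattern of z
   their sum is twice the l-th one, that is 2. *)
have diag1 i : tau (jmul z Y i i) = 1 by rewrite zY /mx1 eqxx tau1.
have sum3 : \sum_i tau (jmul z Y i i) = 3%:R.
  by under eq_bigr do rewrite diag1; rewrite sumr_const card_ord.
have sum2 : \sum_k (tr_term z Y l k + tr_term z Y k l) = 2%:R.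
  by apply: (mulfI (invr_neq0 two_neq0)); rewrite -tau_jmul_diag diag1 mulVf.
move: sum3; rewrite sum_tau_jmul_diag (sum_cross_pattern (l := l)) ?sum2.
  by move/eqP; rewrite eq_sym (negbTE three_neq_two).
by move=> i k /z0 zik; rewrite /tr_term zik mul0c tau0.
Qed.

Definition mxunit (l : 'I_3) : M :=
  fun i j => if (i == l) && (j == l) then c1 K else c0 K.

Lemma herm_mxunit gam l : (forall i, gam i != 0) -> herm gam (mxunit l).
Proof.
move=> gam0 i j; rewrite /mxunit.
case: (i =P l) => [->|_]; case: (j =P l) => [->|_] /=;
  by rewrite ?conj0 ?conj1 ?scalec0 ?scaleK.
Qed.

Lemma jmul_unitl (X : M) l i j : jmul (mxunit l) X i j =
  cscale h (cadd (if i == l then X l j else c0 K) (if j == l then X i l else c0 K)).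
Proof.
rewrite /jmul /mxscale /mxadd /mxmul /mxunit.
by case_ord3 i; case_ord3 j; case_ord3 l;
  rewrite /= ?mul1c ?mulc1 ?mul0c ?mulc0 ?add0c ?addc0.
Qed.

Lemma jmul_unitr (X : M) l i j : jmul X (mxunit l) i j =
  cscale h (cadd (if j == l then X i l else c0 K) (if i == l then X l j else c0 K)).
Proof.
rewrite /jmul /mxscale /mxadd /mxmul /mxunit.
by case_ord3 i; case_ord3 j; case_ord3 l;
  rewrite /= ?mul1c ?mulc1 ?mul0c ?mulc0 ?add0c ?addc0.
Qed.

Lemma jmul_unit_idem l : jmul (mxunit l) (mxunit l) = mxunit l.
Proof.
apply: mx_ext => i j; rewrite jmul_unitl /mxunit.
by case: (i == l); case: (j == l);
  rewrite /= ?eqxx ?andbF ?add0c ?scalec0 ?half_double.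
Qed.

Definition missing_index (i j : 'I_3) : 'I_3 :=
  if (i != o0) && (j != o0) then o0 else if (i != o1) && (j != o1) then o1 else o2.

Lemma missing_indexC i j : missing_index i j = missing_index j i.
Proof. by rewrite /missing_index andbC [(j != o1) && _]andbC. Qed.

Lemma missing_index_neql i j : missing_index i j != i.
Proof. by case_ord3 i; case_ord3 j. Qed.

Lemma missing_index_neqr i j : missing_index i j != j.
Proof. by rewrite missing_indexC missing_index_neql. Qed.

Definition mxmask (S : pred 'I_3) (X : M) : M :=
  fun i j => if S (missing_index i j) then X i j else c0 K.

Lemma herm_mxmask gam S X : herm gam X -> herm gam (mxmask S X).
Proof.
move=> hX i j; rewrite /mxmask missing_indexC.
by case: (S _); [exact: hX | rewrite conj0 !scalec0].
Qed.

Lemma mxmask_pred1_row k X j : mxmask (pred1 k) X k j = c0 K.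
Proof. by rewrite /mxmask /= (negbTE (missing_index_neql _ _)). Qed.

Lemma mxmask_pred1_col k X i : mxmask (pred1 k) X i k = c0 K.
Proof. by rewrite /mxmask /= (negbTE (missing_index_neqr _ _)). Qed.

Lemma mxmask_pred1_predC1 X :
  X = mxadd (mxmask (pred1 o0) X) (mxmask (predC1 o0) X).
Proof.
apply: mx_ext => i j; rewrite /mxadd /mxmask.
by case: (ord3P (missing_index i j)) => -> /=; rewrite ?add0c ?addc0.
Qed.

Lemma mxmask_predC1 X :
  mxmask (predC1 o0) X = mxadd (mxmask (pred1 o1) X) (mxmask (pred1 o2) X).
Proof.
apply: mx_ext => i j; rewrite /mxadd /mxmask.
by case: (ord3P (missing_index i j)) => -> /=; rewrite ?add0c ?addc0.
Qed.

Section InvertibleValues.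
Variables (gam : 'I_3 -> F) (d : M -> M).
Hypotheses (gam_neq0 : forall i, gam i != 0)
  (derD : forall X Y, herm gam X -> herm gam Y -> d (mxadd X Y) = mxadd (d X) (d Y))
  (derM : forall X Y, herm gam X -> herm gam Y ->
     d (jmul X Y) = mxadd (jmul (d X) Y) (jmul X (d Y)))
  (der_values : forall X, herm gam X -> d X = mx0 K \/ jinvertible gam (d X)).

Lemma herm_mx0 : herm gam (mx0 K).
Proof. by move=> i j; rewrite /mx0 conj0 !scalec0. Qed.

Lemma der0 : d (mx0 K) = mx0 K.
Proof.
have d00 := derD herm_mx0 herm_mx0; rewrite mxadd00 in d00.
by apply: mx_ext => i j; apply: double_eq_self; rewrite {3}d00.
Qed.

Lemma der_mxunit l : d (mxunit l) = mx0 K.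
Proof.
have hE := herm_mxunit l gam_neq0.
have dE := derM hE hE; rewrite jmul_unit_idem in dE.
have dEij i j : d (mxunit l) i j =
    cadd (jmul (d (mxunit l)) (mxunit l) i j) (jmul (mxunit l) (d (mxunit l)) i j).
  by rewrite {1}dE.
have [//|inv] := der_values hE; exfalso.
apply: (not_jinvertible_peirce_half (l := l) _ inv) => i j.
case: (i =P l) => [->|/eqP/negbTE il]; case: (j =P l) => [->|/eqP/negbTE jl] //= _.
  by apply: double_eq_self; rewrite [RHS]dEij jmul_unitl jmul_unitr eqxx !half_double.
by rewrite dEij jmul_unitl jmul_unitr il jl add0c scalec0 add0c.
Qed.

Lemma der_peirce0 P l : herm gam P ->
  (forall k, P l k = c0 K) -> (forall k, P k l = c0 K) -> d P = mx0 K.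
Proof.
move=> hP Pr Pc; have hE := herm_mxunit l gam_neq0.
have EP : jmul (mxunit l) P = mx0 K.
  apply: mx_ext => i j; rewrite jmul_unitl.
  by case: (_ == l); case: (_ == l); rewrite ?Pr ?Pc ?add0c ?scalec0.
have EdP i j : jmul (mxunit l) (d P) i j = c0 K.
  have := congr1 (fun N : M => N i j) (derM hE hP).
  by rewrite EP der0 der_mxunit jmul0l /mxadd /mx0 add0c.
have h_neq0 : h != 0 by rewrite invr_neq0.
have dPl k : d P l k = c0 K /\ d P k l = c0 K.
  move: (EdP l k) (EdP k l); rewrite !jmul_unitl eqxx.
  case: (k =P l) => [->|_]; first by rewrite half_double => ->.
  by rewrite add0c addc0 => /(scale_eq0 h_neq0) -> /(scale_eq0 h_neq0) ->.
have [//|inv] := der_values hP; exfalso.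
by apply: (not_jinvertible_peirce0 (l := l) _ _ inv) => k; case: (dPl k).
Qed.

Lemma der_herm0 X : herm gam X -> d X = mx0 K.
Proof.
move=> hX; have hM S := herm_mxmask S hX.
have der_pred1 k : d (mxmask (pred1 k) X) = mx0 K.
  by apply: (der_peirce0 (l := k)) => // m;
    rewrite ?mxmask_pred1_row ?mxmask_pred1_col.
rewrite (mxmask_pred1_predC1 X) derD // mxmask_predC1 derD //.
by rewrite !der_pred1 !mxadd00.
Qed.

End InvertibleValues.

Lemma no_inv_valued_derivation gam (d : M -> M) :
  (forall i, gam i != 0) -> ~ inv_valued_derivation gam d.
Proof.
move=> gam_neq0 [[_ [derD [_ derM]]] [[X [hX dX]] der_values]].
exact: dX (der_herm0 gam_neq0 derD derM der_values hX).
Qed.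

End TracedAlgebra.

Section CayleyDickson.
Context {F : fieldType} {a b c : F}.
Local Notation K := (cayley_dickson a b c).

(* The coefficient of 1, i.e. half the trace of C. *)
Definition cd_tr (x : cT K) : F := x.1.1.1.

Ltac cd_case x := case: x => [[[? ?] [? ?]] [[? ?] [? ?]]].
Ltac cd_ring :=
  rewrite /=; repeat match goal with |- (_, _) = (_, _) => congr pair end; ring.

Lemma cd_trC (x y : cT K) : cd_tr (cmul x y) = cd_tr (cmul y x).
Proof. by cd_case x; cd_case y; rewrite /cd_tr /=; ring. Qed.

Lemma cd_trD (x y : cT K) : cd_tr (cadd x y) = cd_tr x + cd_tr y.
Proof. by cd_case x; cd_case y. Qed.

Lemma cd_trZ r (x : cT K) : cd_tr (cscale r x) = r * cd_tr x.
Proof. by cd_case x. Qed.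

Lemma cd_tr0 : cd_tr (c0 K) = 0. Proof. by []. Qed.
Lemma cd_tr1 : cd_tr (c1 K) = 1. Proof. by []. Qed.

Lemma cd_add0c (x : cT K) : cadd (c0 K) x = x. Proof. by cd_case x; cd_ring. Qed.
Lemma cd_addc0 (x : cT K) : cadd x (c0 K) = x. Proof. by cd_case x; cd_ring. Qed.
Lemma cd_mul0c (x : cT K) : cmul (c0 K) x = c0 K. Proof. by cd_case x; cd_ring. Qed.
Lemma cd_mulc0 (x : cT K) : cmul x (c0 K) = c0 K. Proof. by cd_case x; cd_ring. Qed.
Lemma cd_mul1c (x : cT K) : cmul (c1 K) x = x. Proof. by cd_case x; cd_ring. Qed.
Lemma cd_mulc1 (x : cT K) : cmul x (c1 K) = x. Proof. by cd_case x; cd_ring. Qed.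
Lemma cd_scalec0 r : cscale r (c0 K) = c0 K. Proof. by cd_ring. Qed.
Lemma cd_conj0 : cconj (c0 K) = c0 K. Proof. by cd_ring. Qed.
Lemma cd_conj1 : cconj (c1 K) = c1 K. Proof. by cd_ring. Qed.

Lemma cd_scaleK r (x : cT K) : r != 0 -> cscale r^-1 (cscale r x) = x.
Proof. by move=> r0; cd_case x; rewrite /= !mulrA !mulVf ?mul1r. Qed.

Lemma cd_half_double :
  (2%:R : F) != 0 -> forall x : cT K, cscale 2%:R^-1 (cadd x x) = x.
Proof.
move=> two0 x; have half (y : F) : 2%:R^-1 * (y + y) = y by field.
by cd_case x; rewrite /= !half.
Qed.

Lemma cd_double_eq_self (x : cT K) : cadd x x = x -> x = c0 K.
Proof.
have double (y : F) : y + y = y -> y = 0 by move/(canRL (addrK y)); rewrite subrr.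
by cd_case x => /= [[/double-> /double-> /double-> /double->
                     /double-> /double-> /double-> /double->]].
Qed.

End CayleyDickson.

Theorem lemma6 (F : fieldType) (hchar2 : (2%:R : F) != 0) (hchar3 : (3%:R : F) != 0)
  (a b c : F) (ha : a != 0) (hb : b != 0) (hc : c != 0)
  (gam : 'I_3 -> F) (hgam : forall i, gam i != 0) :
  ~ exists d : mx3 (cayley_dickson a b c) -> mx3 (cayley_dickson a b c),
      inv_valued_derivation gam d.
Proof.
case=> d; apply: (no_inv_valued_derivation cd_trC cd_trD cd_trZ cd_tr0 cd_tr1
  cd_add0c cd_addc0 cd_mul0c cd_mulc0 cd_mul1c cd_mulc1 cd_scalec0 cd_scaleK
  cd_conj0 cd_conj1 (cd_half_double hchar2) cd_double_eq_self hchar2 hgam).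
Qed.
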